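(* Assume the setting below, with $u_0\in C^7_0[x_l,x_r]$. (i) If $U^0,U^1\in Z^0_h$ are arbitrary and $U^2,\dots,U^N\in Z^0_h$ satisfy the scheme (S), then for all $0\le n\le N-1$, $$E^n:=\frac{\|U^{n+1}\|^2+\|U^n\|^2}{2}+\alpha\frac{\|U^{n+1}_x\|^2+\|U^n_x\|^2}{2}+\lambda\frac{\|U^{n+1}_{x\bar x}\|^2+\|U^n_{x\bar x}\|^2}{2}=E^0.$$ (ii) If moreover $U^0_i=u_0(x_i)$ for $0\le i\le M$ and $U^1\in Z^0_h$ satisfies the starting scheme (CN), then $\|U^1\|^2+\alpha\|U^1_x\|^2+\lambda\|U^1_{x\bar x}\|^2=\|U^0\|^2+\alpha\|U^0_x\|^2+\lambda\|U^0_{x\bar x}\|^2$, and there is a constant $C>0$ independent of $h,\tau,n$ such that $\|U^n\|_\infty\le C$ and $\|U^n_x\|_\infty\le C$ for all $0\le n\le N$.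
   Context: Setting. Fix an integer $m\ge1$, real constants $a,b,c,\nu$, positive constants $\alpha,\lambda$, $x_l<x_r$, $T>0$. $C^7_0[x_l,x_r]$ is the set of seven times continuously differentiable functions on $[x_l,x_r]$ with compact support in $(x_l,x_r)$. Integers $M\ge4$, $N\ge2$; $h=(x_r-x_l)/M$, $\tau=T/N$, $x_i=x_l+ih$, $t_n=n\tau$. A grid function is a real vector $U=(U_i)_{i=-1}^{M+1}$; $Z^0_h$ is the set of grid functions with $U_{-1}=U_0=U_1=U_{M-1}=U_M=U_{M+1}=0$ (it is assumed $u_0(x_1)=u_0(x_{M-1})=0$, so $U^0\in Z^0_h$ is consistent). Operators: $(U_x)_i=(U_{i+1}-U_i)/h$, $(U_{\bar x})_i=(U_i-U_{i-1})/h$, $(U_{\hat x})_i=(U_{i+1}-U_{i-1})/(2h)$, compound subscripts are compositions (e.g. $(U_{x\bar x})_i=(U_{i+1}-2U_i+U_{i-1})/h^2$). $(U,V)=h\sum_{i=1}^{M-1}U_iV_i$, $\|U\|^2=(U,U)$ (also applied to difference quotients, summing over $1\le i\le M-1$), $\|U\|_\infty=\max_{1\le i\le M-1}|U_i|$. For a sequence of grid functions $U^0,\dots,U^N$: $\bar U^n=(U^{n+1}+U^{n-1})/2$, $(U^n)_t=(U^{n+1}-U^{n-1})/(2\tau)$, and e.g. $(U^n)_{x\bar xt}=\big((U^{n+1}-U^{n-1})/(2\tau)\big)_{x\bar x}$, $(U^n)_{xx\bar x\bar xt}=\big((U^{n+1}-U^{n-1})/(2\tau)\big)_{xx\bar x\bar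 x}$. For grid functions $V,W$, $V^mW$ denotes $i\mapsto V_i^mW_i$. Scheme (S): for $1\le n\le N-1$ and $2\le i\le M-2$, $$(U^n)_{t,i}+a(\bar U^n)_{\hat x,i}+\tfrac{b}{m+2}\big[(U^n_i)^m(\bar U^n)_{\hat x,i}+((U^n)^m\bar U^n)_{\hat x,i}\big]+c(\bar U^n)_{x\bar x\hat x,i}-\alpha(U^n)_{x\bar xt,i}+\lambda(U^n)_{xx\bar x\bar xt,i}-\nu(\bar U^n)_{xx\bar x\bar x\hat x,i}=0.$$ Starting scheme (CN): with $W=(U^1+U^0)/2$, for $2\le i\le M-2$, $$\tfrac{U^1_i-U^0_i}{\tau}+aW_{\hat x,i}+\tfrac{b}{m+2}\big[W_i^mW_{\hat x,i}+(W^mW)_{\hat x,i}\big]-\alpha\Big(\tfrac{U^1-U^0}{\tau}\Big)_{x\bar x,i}+cW_{x\bar x\hat x,i}+\lambda\Big(\tfrac{U^1-U^0}{\tau}\Big)_{xx\bar x\bar x,i}-\nu W_{xx\bar x\bar x\hat x,i}=0.$$ *)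

From Stdlib Require Import Reals ZArith.
Open Scope R_scope.

(* Grid functions: Z -> R; only the indices -1..M+1 are ever used. *)
Definition grid := Z -> R.

Definition dx (h : R) (U : grid) : grid := fun i => (U (i + 1)%Z - U i) / h.
Definition dbx (h : R) (U : grid) : grid := fun i => (U i - U (i - 1)%Z) / h.
Definition dhx (h : R) (U : grid) : grid := fun i => (U (i + 1)%Z - U (i - 1)%Z) / (2 * h).

Fixpoint sum_nat (f : nat -> R) (n : nat) : R :=
  match n with O => 0 | S k => sum_nat f k + f k end.

(* max_{k=0}^{n-1} f k (with 0 as base value; used for nonnegative f) *)
Fixpoint max_nat (f : nat -> R) (n : nat) : R :=
  match n with O => 0 | S k => Rmax (max_nat f k) (f k) end.

Definition ip (M : nat) (h : R) (U V : grid) : R :=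
  h * sum_nat (fun k => U (Z.of_nat (S k)) * V (Z.of_nat (S k))) (M - 1).

Definition nrm2 (M : nat) (h : R) (U : grid) : R := ip M h U U.

Definition supn (M : nat) (U : grid) : R :=
  max_nat (fun k => Rabs (U (Z.of_nat (S k)))) (M - 1).

Definition inZ0 (M : nat) (U : grid) : Prop :=
  U (-1)%Z = 0 /\ U 0%Z = 0 /\ U 1%Z = 0 /\
  U (Z.of_nat M - 1)%Z = 0 /\ U (Z.of_nat M) = 0 /\ U (Z.of_nat M + 1)%Z = 0.

Definition scheme_S (m : nat) (a b c nu alpha lambda h tau : R)
    (U : nat -> grid) (n : nat) (i : Z) : Prop :=
  let Ub : grid := fun j => (U (S n) j + U (n - 1)%nat j) / 2 in
  let Ut : grid := fun j => (U (S n) j - U (n - 1)%nat j) / (2 * tau) in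
  Ut i + a * dhx h Ub i
  + b / (INR m + 2) * (U n i ^ m * dhx h Ub i
                       + dhx h (fun j => U n j ^ m * Ub j) i)
  + c * dhx h (dbx h (dx h Ub)) i
  - alpha * dbx h (dx h Ut) i
  + lambda * dbx h (dbx h (dx h (dx h Ut))) i
  - nu * dhx h (dbx h (dbx h (dx h (dx h Ub)))) i = 0.

Definition scheme_CN (m : nat) (a b c nu alpha lambda h tau : R)
    (U0 U1 : grid) (i : Z) : Prop :=
  let W : grid := fun j => (U1 j + U0 j) / 2 in
  let D : grid := fun j => (U1 j - U0 j) / tau in
  D i + a * dhx h W i
  + b / (INR m + 2) * (W i ^ m * dhx h W i + dhx h (fun j => W j ^ m * W j) i)
  - alpha * dbx h (dx h D) i
  + c * dhx h (dbx h (dx h W)) i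
  + lambda * dbx h (dbx h (dx h (dx h D))) i
  - nu * dhx h (dbx h (dbx h (dx h (dx h W)))) i = 0.

Definition energy (M : nat) (alpha lambda h : R) (U : nat -> grid) (n : nat) : R :=
  (nrm2 M h (U (S n)) + nrm2 M h (U n)) / 2
  + alpha * (nrm2 M h (dx h (U (S n))) + nrm2 M h (dx h (U n))) / 2
  + lambda * (nrm2 M h (dbx h (dx h (U (S n)))) + nrm2 M h (dbx h (dx h (U n)))) / 2.

Definition energy1 (M : nat) (alpha lambda h : R) (V : grid) : R :=
  nrm2 M h V + alpha * nrm2 M h (dx h V) + lambda * nrm2 M h (dbx h (dx h V)).

(* C^7_0[xl,xr]: u (extended by zero to R) is 7 times continuously
   differentiable and vanishes outside a compact [p,q] inside (xl,xr). *)
Definition C7_0 (xl xr : R) (u : R -> R) : Prop :=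
  exists D : nat -> R -> R,
    (forall x, D O x = u x) /\
    (forall k, (k < 7)%nat -> forall x, derivable_pt_lim (D k) x (D (S k) x)) /\
    continuity (D 7%nat) /\
    exists p q, xl < p /\ p <= q /\ q < xr /\
      forall x, (x < p \/ q < x) -> u x = 0.

(* Multiply the two-level scheme at node i by the time average of the two levels.
   Every spatial term then becomes a difference of neighbouring fluxes (the central
   differences are skew-adjoint, and the nonlinear term is written in the split form
   U^m V_x + (U^m V)_x precisely so that it is too), so summing over the nodes only the
   time differences survive: E^n = E^(n-1), and (CN) preserves the energy of U^0.
   The energy controls ||U_x|| and ||U_{x xbar}||, and the discrete Sobolev inequality
   V_i^2 <= (x_r - x_l) ||V_x||^2 for V vanishing at x_l gives the max-norm bounds;
   E^0 is bounded through u_0, u_0', u_0'' by the mean value theorem. *)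

From Pilot Require Import Defs.
From Stdlib Require Import Reals ZArith Lra Lia Psatz.
(* Re-imported so that [sum_nat] means [Defs.sum_nat], not [Rfunctions.sum_nat]. *)
Import Defs.
Open Scope R_scope.

(* [field] treats [U (i + 1 - 1)] and [U i] as unrelated atoms, so every grid
   index is first rewritten to [i] or [i + k] with a literal [k]. *)
Ltac index_offset e i :=
  lazymatch e with
  | i => constr:(0%Z)
  | (?e1 + ?z)%Z => let o := index_offset e1 i in constr:((o + z)%Z)
  | (?e1 - ?z)%Z => let o := index_offset e1 i in constr:((o - z)%Z)
  end.

Ltac is_Z_literal z := lazymatch z with Zpos _ => idtac | Zneg _ => idtac | Z0 => idtac end.

Ltac normalize_indices i :=
  repeat match goal with
  | |- context [?f ?e] =>
      lazymatch type of e with Z => idtac end;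
      lazymatch e with
      | i => fail
      | (i + ?z)%Z => is_Z_literal z; fail
      | _ =>
          let o := index_offset e i in
          let o := eval compute in o in
          lazymatch o with
          | Z0 => replace e with i by ring
          | _ => replace e with (i + o)%Z by ring
          end
      end
  end.

Lemma sum_nat_ext (f g : nat -> R) n :
  (forall k, (k < n)%nat -> f k = g k) -> sum_nat f n = sum_nat g n.
Proof.
  induction n as [|n IH]; intros Hfg; simpl; [reflexivity|].
  rewrite IH by (intros; apply Hfg; lia). rewrite Hfg by lia; reflexivity.
Qed.

Lemma sum_nat_eq0 (f : nat -> R) n : (forall k, (k < n)%nat -> f k = 0) -> sum_nat f n = 0.
Proof.
  induction n as [|n IH]; intros Hf; simpl; [reflexivity|].
  rewrite IH by (intros; apply Hf; lia). rewrite Hf by lia; ring.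
Qed.

Lemma sum_nat_add (f g : nat -> R) n :
  sum_nat (fun k => f k + g k) n = sum_nat f n + sum_nat g n.
Proof. induction n as [|n IH]; simpl; [ring | rewrite IH; ring]. Qed.

Lemma sum_nat_sub (f g : nat -> R) n :
  sum_nat (fun k => f k - g k) n = sum_nat f n - sum_nat g n.
Proof. induction n as [|n IH]; simpl; [ring | rewrite IH; ring]. Qed.

Lemma sum_nat_scal (r : R) (f : nat -> R) n : sum_nat (fun k => r * f k) n = r * sum_nat f n.
Proof. induction n as [|n IH]; simpl; [ring | rewrite IH; ring]. Qed.

Lemma sum_nat_telescope (F : nat -> R) n : sum_nat (fun k => F (S k) - F k) n = F n - F O.
Proof. induction n as [|n IH]; simpl; [ring | rewrite IH; ring]. Qed.

Lemma sum_nat_nonneg (f : nat -> R) n : (forall k, 0 <= f k) -> 0 <= sum_nat f n.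
Proof. intros Hf; induction n as [|n IH]; simpl; [lra | specialize (Hf n); lra]. Qed.

Lemma sum_nat_le_len (f : nat -> R) n p :
  (forall k, 0 <= f k) -> (n <= p)%nat -> sum_nat f n <= sum_nat f p.
Proof. intros Hf Hnp; induction Hnp as [|p _ IH]; simpl; [lra | specialize (Hf p); lra]. Qed.

Lemma sum_nat_le_const (f : nat -> R) n r :
  (forall k, (k < n)%nat -> f k <= r) -> sum_nat f n <= INR n * r.
Proof.
  induction n as [|n IH]; intros Hf; simpl sum_nat; [simpl; lra|].
  rewrite S_INR; specialize (IH (fun k Hk => Hf k ltac:(lia))); specialize (Hf n ltac:(lia)); lra.
Qed.

Lemma sum_nat_shift (f : nat -> R) n : sum_nat f (S n) = f O + sum_nat (fun k => f (S k)) n.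
Proof. induction n as [|n IH]; simpl in *; [ring | rewrite IH; ring]. Qed.

Lemma sum_nat_sq_le (f : nat -> R) n :
  sum_nat f n * sum_nat f n <= INR n * sum_nat (fun k => f k * f k) n.
Proof.
  induction n as [|n IH]; simpl sum_nat; [simpl; lra|].
  rewrite S_INR.
  set (s := sum_nat f n) in *; set (q := sum_nat (fun k => f k * f k) n) in *; set (x := f n).
  assert (Hq : 0 <= q) by (apply sum_nat_nonneg; intros; nra).
  pose proof (pos_INR n) as Hn.
  (* For [n > 0]: [2 n s x <= s^2 + n^2 x^2 <= n q + n^2 x^2]. *)
  assert (Hcross : 2 * s * x <= q + INR n * x * x).
  { destruct (Req_dec (INR n) 0) as [Hn0 | Hn0].
    - rewrite Hn0 in IH; assert (Hs : s = 0) by nra; rewrite Hs, Hn0; lra.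
    - pose proof (pow2_ge_0 (s - INR n * x)).
      assert (INR n * (2 * s * x) <= INR n * (q + INR n * x * x)) by nra.
      apply (Rmult_le_reg_l (INR n)); lra. }
  nra.
Qed.

Definition avg (A B : grid) : grid := fun j => (A j + B j) / 2.

Section EnergyIdentity.

Variables (m : nat) (a b c nu alpha lambda h k : R).
Hypotheses (h_neq0 : h <> 0) (k_neq0 : k <> 0).

(* Both (S) (with [k = 2 tau], new level [U^{n+1}], old level [U^{n-1}],
   [P = U^n]) and (CN) (with [k = tau], [P = W]) are instances. *)
Definition two_level (A B P : grid) (i : Z) : R :=
  let Ub := avg A B in
  let Ut : grid := fun j => (A j - B j) / k in
  Ut i + a * dhx h Ub i
  + b / (INR m + 2) * (P i ^ m * dhx h Ub i + dhx h (fun j => P j ^ m * Ub j) i)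
  + c * dhx h (dbx h (dx h Ub)) i
  - alpha * dbx h (dx h Ut) i
  + lambda * dbx h (dbx h (dx h (dx h Ut))) i
  - nu * dhx h (dbx h (dbx h (dx h (dx h Ub)))) i.

Definition flux_dhx (V : grid) (i : Z) : R := V i * V (i + 1)%Z.

Definition flux_nonlinear (P V : grid) (i : Z) : R :=
  P i ^ m * V i * V (i + 1)%Z + P (i + 1)%Z ^ m * V (i + 1)%Z * V i.

Definition flux_dhx3 (V : grid) (i : Z) : R :=
  V (i + 2)%Z * V i + V (i + 1)%Z * V (i - 1)%Z - 2 * (V (i + 1)%Z * V i).

Definition flux_dhx5 (V : grid) (i : Z) : R :=
  V (i + 3)%Z * V i + V (i + 2)%Z * V (i - 1)%Z + V (i + 1)%Z * V (i - 2)%Z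
  - 4 * (V (i + 2)%Z * V i + V (i + 1)%Z * V (i - 1)%Z) + 5 * (V (i + 1)%Z * V i).

Definition flux_dxx (A B : grid) (i : Z) : R :=
  ((A (i + 1)%Z - B (i + 1)%Z) - (A i - B i)) * (A (i + 1)%Z + B (i + 1)%Z).

Definition second_diff (V : grid) (j : Z) : R := V (j + 1)%Z - 2 * V j + V (j - 1)%Z.

Definition flux_dxxxx (A B : grid) (i : Z) : R :=
  let D : grid := fun j => A j - B j in
  second_diff D (i + 1)%Z * (A i + B i) - second_diff D i * (A (i + 1)%Z + B (i + 1)%Z).

Lemma dhx_mul_self V i :
  dhx h V i * V i = (flux_dhx V i - flux_dhx V (i - 1)) / (2 * h).
Proof. unfold dhx, flux_dhx; normalize_indices i; field; exact h_neq0. Qed.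

Lemma nonlinear_mul_self (P V : grid) i :
  (P i ^ m * dhx h V i + dhx h (fun j => P j ^ m * V j) i) * V i
  = (flux_nonlinear P V i - flux_nonlinear P V (i - 1)) / (2 * h).
Proof. unfold dhx, flux_nonlinear; normalize_indices i; field; exact h_neq0. Qed.

Lemma dhx3_mul_self V i :
  dhx h (dbx h (dx h V)) i * V i = (flux_dhx3 V i - flux_dhx3 V (i - 1)) / (2 * h ^ 3).
Proof. unfold dhx, dbx, dx, flux_dhx3; normalize_indices i; field; exact h_neq0. Qed.

Lemma dhx5_mul_self V i :
  dhx h (dbx h (dbx h (dx h (dx h V)))) i * V i
  = (flux_dhx5 V i - flux_dhx5 V (i - 1)) / (2 * h ^ 5).
Proof. unfold dhx, dbx, dx, flux_dhx5; normalize_indices i; field; exact h_neq0. Qed.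

Lemma dxx_mul_avg (A B : grid) i :
  dbx h (dx h (fun j => (A j - B j) / k)) i * avg A B i * (2 * k)
  = - (dx h A i ^ 2 - dx h B i ^ 2) + (flux_dxx A B i - flux_dxx A B (i - 1)) / h ^ 2.
Proof. unfold avg, dbx, dx, flux_dxx; normalize_indices i; field; auto. Qed.

Lemma dxxxx_mul_avg (A B : grid) i :
  dbx h (dbx h (dx h (dx h (fun j => (A j - B j) / k)))) i * avg A B i * (2 * k)
  = (dbx h (dx h A) i ^ 2 - dbx h (dx h B) i ^ 2)
    + (flux_dxxxx A B i - flux_dxxxx A B (i - 1)) / h ^ 4.
Proof. unfold avg, dbx, dx, flux_dxxxx, second_diff; normalize_indices i; field; auto. Qed.

Definition energy_density (X : grid) (i : Z) : R :=
  X i * X i + alpha * (dx h X i * dx h X i) + lambda * (dbx h (dx h X) i * dbx h (dx h X) i).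

Definition two_level_flux (A B P : grid) (i : Z) : R :=
  let V := avg A B in
  a * k / h * flux_dhx V i + b / (INR m + 2) * k / h * flux_nonlinear P V i
  + c * k / h ^ 3 * flux_dhx3 V i - alpha / h ^ 2 * flux_dxx A B i
  + lambda / h ^ 4 * flux_dxxxx A B i - nu * k / h ^ 5 * flux_dhx5 V i.

Lemma two_level_mul_avg (A B P : grid) i :
  two_level A B P i * avg A B i * (2 * k)
  = energy_density A i - energy_density B i
    + (two_level_flux A B P i - two_level_flux A B P (i - 1)).
Proof.
  transitivity ((A i - B i) / k * avg A B i * (2 * k)
    + a * 2 * k * (dhx h (avg A B) i * avg A B i)
    + b / (INR m + 2) * 2 * k * ((P i ^ m * dhx h (avg A B) i
         + dhx h (fun j => P j ^ m * avg A B j) i) * avg A B i)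
    + c * 2 * k * (dhx h (dbx h (dx h (avg A B))) i * avg A B i)
    - alpha * (dbx h (dx h (fun j => (A j - B j) / k)) i * avg A B i * (2 * k))
    + lambda * (dbx h (dbx h (dx h (dx h (fun j => (A j - B j) / k)))) i * avg A B i * (2 * k))
    - nu * 2 * k * (dhx h (dbx h (dbx h (dx h (dx h (avg A B))))) i * avg A B i)).
  { unfold two_level. ring. }
  rewrite dhx_mul_self, nonlinear_mul_self, dhx3_mul_self, dxx_mul_avg,
    dxxxx_mul_avg, dhx5_mul_self.
  unfold energy_density, two_level_flux, avg.
  field; pose proof (pos_INR m); repeat split; auto; lra.
Qed.

Lemma two_level_flux_eq0_l (A B P : grid) j :
  A (j - 1)%Z = 0 -> A j = 0 -> A (j + 1)%Z = 0 ->
  B (j - 1)%Z = 0 -> B j = 0 -> B (j + 1)%Z = 0 ->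
  two_level_flux A B P j = 0.
Proof.
  intros HA1 HA2 HA3 HB1 HB2 HB3.
  unfold two_level_flux, flux_dhx, flux_nonlinear, flux_dhx3, flux_dhx5, flux_dxx,
    flux_dxxxx, second_diff, avg.
  replace (j - 1)%Z with (j + -1)%Z in * by ring.
  normalize_indices j.
  rewrite HA1, HA2, HA3, HB1, HB2, HB3.
  unfold Rdiv; ring.
Qed.

Lemma two_level_flux_eq0_r (A B P : grid) j :
  A j = 0 -> A (j + 1)%Z = 0 -> A (j + 2)%Z = 0 ->
  B j = 0 -> B (j + 1)%Z = 0 -> B (j + 2)%Z = 0 ->
  two_level_flux A B P j = 0.
Proof.
  intros HA1 HA2 HA3 HB1 HB2 HB3.
  unfold two_level_flux, flux_dhx, flux_nonlinear, flux_dhx3, flux_dhx5, flux_dxx,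
    flux_dxxxx, second_diff, avg.
  normalize_indices j.
  rewrite HA1, HA2, HA3, HB1, HB2, HB3.
  unfold Rdiv; ring.
Qed.

Lemma energy1_eq_sum M X :
  energy1 M alpha lambda h X = h * sum_nat (fun j => energy_density X (Z.of_nat (S j))) (M - 1).
Proof. unfold energy1, nrm2, ip, energy_density; rewrite !sum_nat_add, !sum_nat_scal; ring. Qed.

Lemma two_level_conserves_energy M (A B P : grid) :
  (4 <= M)%nat -> inZ0 M A -> inZ0 M B ->
  (forall i, (2 <= i <= Z.of_nat M - 2)%Z -> two_level A B P i = 0) ->
  energy1 M alpha lambda h A = energy1 M alpha lambda h B.
Proof.
  intros HM HA HB Hscheme.
  destruct HA as [HAm1 [HA0 [HA1 [HAM1 [HAM HAMp1]]]]].
  destruct HB as [HBm1 [HB0 [HB1 [HBM1 [HBM HBMp1]]]]].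
  set (F n := two_level_flux A B P (Z.of_nat n)).
  assert (Hsum : sum_nat (fun j => two_level A B P (Z.of_nat (S j))
                                   * avg A B (Z.of_nat (S j)) * (2 * k)) (M - 1) = 0).
  { apply sum_nat_eq0; intros j Hj.
    assert (Hi : (Z.of_nat (S j) = 1 \/ Z.of_nat (S j) = Z.of_nat M - 1
                  \/ 2 <= Z.of_nat (S j) <= Z.of_nat M - 2)%Z) by lia.
    destruct Hi as [-> | [-> | Hi]].
    - assert (avg A B 1%Z = 0) as -> by (unfold avg; rewrite HA1, HB1; field); ring.
    - assert (avg A B (Z.of_nat M - 1)%Z = 0) as -> by (unfold avg; rewrite HAM1, HBM1; field).
      ring.
    - rewrite Hscheme by exact Hi; ring. }
  rewrite (sum_nat_ext _ (fun j => (energy_density A (Z.of_nat (S j))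
                                    - energy_density B (Z.of_nat (S j))) + (F (S j) - F j)))
    in Hsum.
  2:{ intros j _; rewrite two_level_mul_avg; unfold F.
      replace (Z.of_nat (S j) - 1)%Z with (Z.of_nat j) by lia; reflexivity. }
  rewrite sum_nat_add, sum_nat_sub, sum_nat_telescope in Hsum.
  assert (HF0 : F O = 0) by (apply two_level_flux_eq0_l; assumption).
  assert (HFM : F (M - 1)%nat = 0).
  { unfold F; replace (Z.of_nat (M - 1)) with (Z.of_nat M - 1)%Z by lia.
    replace (Z.of_nat M) with (Z.of_nat M - 1 + 1)%Z in HAM, HBM by ring.
    replace (Z.of_nat M + 1)%Z with (Z.of_nat M - 1 + 2)%Z in HAMp1, HBMp1 by ring.
    apply two_level_flux_eq0_r; assumption. }
  rewrite !energy1_eq_sum; f_equal; lra.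
Qed.

End EnergyIdentity.

Lemma scheme_S_two_level m a b c nu alpha lambda h tau U n i :
  scheme_S m a b c nu alpha lambda h tau U n i ->
  two_level m a b c nu alpha lambda h (2 * tau) (U (S n)) (U (n - 1)%nat) (U n) i = 0.
Proof. intros H; exact H. Qed.

Lemma scheme_CN_two_level m a b c nu alpha lambda h tau U0 U1 i :
  scheme_CN m a b c nu alpha lambda h tau U0 U1 i ->
  two_level m a b c nu alpha lambda h tau U1 U0 (avg U1 U0) i = 0.
Proof. unfold scheme_CN, two_level, avg; intros H; rewrite <- H; ring. Qed.

Lemma energy_eq_avg_energy1 M alpha lambda h U n :
  energy M alpha lambda h U n
  = (energy1 M alpha lambda h (U (S n)) + energy1 M alpha lambda h (U n)) / 2.
Proof. unfold energy, energy1; field. Qed.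

Lemma energy_conserved m a b c nu alpha lambda M N (U : nat -> grid) h tau :
  h <> 0 -> tau <> 0 -> (4 <= M)%nat ->
  (forall n, (n <= N)%nat -> inZ0 M (U n)) ->
  (forall n, (1 <= n <= N - 1)%nat -> forall i, (2 <= i <= Z.of_nat M - 2)%Z ->
     scheme_S m a b c nu alpha lambda h tau U n i) ->
  forall n, (n <= N - 1)%nat -> energy M alpha lambda h U n = energy M alpha lambda h U 0.
Proof.
  intros Hh Htau HM HZ HS n; induction n as [|n IH]; intros Hn; [reflexivity|].
  rewrite <- IH by lia; rewrite !energy_eq_avg_energy1.
  assert (Hstep : energy1 M alpha lambda h (U (S (S n))) = energy1 M alpha lambda h (U n)).
  { replace (U n) with (U (S n - 1)%nat) by (f_equal; lia).
    apply (two_level_conserves_energy m a b c nu alpha lambda h (2 * tau)) with (P := U (S n));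
      try (apply HZ; lia); auto with real.
    intros i Hi; apply scheme_S_two_level, HS; [lia | exact Hi]. }
  rewrite Hstep; field.
Qed.

Lemma grid_eq_sum_dx h (Y : grid) n :
  h <> 0 -> Y (Z.of_nat n) - Y 0%Z = h * sum_nat (fun j => dx h Y (Z.of_nat j)) n.
Proof.
  intros Hh; rewrite <- sum_nat_scal.
  rewrite (sum_nat_ext _ (fun j => Y (Z.of_nat (S j)) - Y (Z.of_nat j))).
  - symmetry; exact (sum_nat_telescope (fun j => Y (Z.of_nat j)) n).
  - intros j _; unfold dx; rewrite Nat2Z.inj_succ; unfold Z.succ; field; exact Hh.
Qed.

Lemma discrete_sobolev h (Y : grid) n i :
  0 < h -> Y 0%Z = 0 -> (i <= n)%nat ->
  Y (Z.of_nat i) * Y (Z.of_nat i)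
  <= h * INR n * (h * sum_nat (fun j => dx h Y (Z.of_nat j) * dx h Y (Z.of_nat j)) n).
Proof.
  intros Hh HY0 Hin.
  set (d j := dx h Y (Z.of_nat j)).
  assert (HY : Y (Z.of_nat i) = h * sum_nat d i).
  { rewrite <- (Rminus_0_r (Y _)), <- HY0; apply grid_eq_sum_dx; lra. }
  rewrite HY.
  pose proof (sum_nat_sq_le d i) as Hcs.
  pose proof (sum_nat_le_len (fun j => d j * d j) i n (fun j => ltac:(nra)) Hin) as Hlen.
  assert (Hq : 0 <= sum_nat (fun j => d j * d j) i) by (apply sum_nat_nonneg; intros; nra).
  assert (HiM : INR i <= INR n) by (apply le_INR; exact Hin).
  pose proof (pos_INR i).
  change (fun j => dx h Y (Z.of_nat j) * dx h Y (Z.of_nat j)) with (fun j => d j * d j).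
  assert (sum_nat d i * sum_nat d i <= INR n * sum_nat (fun j => d j * d j) n) by nra.
  assert (h * h * (sum_nat d i * sum_nat d i) <= h * h * (INR n * sum_nat (fun j => d j * d j) n))
    by (apply Rmult_le_compat_l; nra).
  lra.
Qed.

Lemma nrm2_nonneg M h X : 0 < h -> 0 <= nrm2 M h X.
Proof. intros Hh; unfold nrm2, ip; apply Rmult_le_pos; [lra | apply sum_nat_nonneg; intros; nra]. Qed.

Lemma sq_le_nrm2_dx M h X i :
  0 < h -> inZ0 M X -> (1 <= M)%nat -> (i <= M)%nat ->
  X (Z.of_nat i) * X (Z.of_nat i) <= h * INR M * nrm2 M h (dx h X).
Proof.
  intros Hh (_ & HX0 & HX1 & _) HM HiM.
  replace (nrm2 M h (dx h X))
    with (h * sum_nat (fun j => dx h X (Z.of_nat j) * dx h X (Z.of_nat j)) M).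
  - exact (discrete_sobolev h X M i Hh HX0 HiM).
  - unfold nrm2, ip; replace M with (S (M - 1)) at 1 by lia; rewrite sum_nat_shift.
    change (Z.of_nat O) with 0%Z.
    assert (dx h X 0%Z = 0) as -> by (unfold dx; simpl; rewrite HX0, HX1; field; lra).
    ring.
Qed.

Lemma sq_dx_le_nrm2_dxx M h X i :
  0 < h -> inZ0 M X -> (i <= M - 1)%nat ->
  dx h X (Z.of_nat i) * dx h X (Z.of_nat i) <= h * INR M * nrm2 M h (dbx h (dx h X)).
Proof.
  intros Hh (_ & HX0 & HX1 & _) HiM.
  assert (Hdx0 : dx h X 0%Z = 0) by (unfold dx; simpl; rewrite HX0, HX1; field; lra).
  replace (nrm2 M h (dbx h (dx h X)))
    with (h * sum_nat (fun j => dx h (dx h X) (Z.of_nat j) * dx h (dx h X) (Z.of_nat j)) (M - 1)).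
  - eapply Rle_trans; [exact (discrete_sobolev h (dx h X) (M - 1) i Hh Hdx0 HiM)|].
    assert (INR (M - 1) <= INR M) by (apply le_INR; lia).
    apply Rmult_le_compat_r; [|apply Rmult_le_compat_l; lra].
    apply Rmult_le_pos; [lra | apply sum_nat_nonneg; intros; nra].
  - unfold nrm2, ip; f_equal; apply sum_nat_ext; intros j _.
    unfold dbx; rewrite Nat2Z.inj_succ; unfold Z.succ; rewrite Z.add_simpl_r; reflexivity.
Qed.

Lemma max_nat_le (f : nat -> R) n r :
  0 <= r -> (forall k, (k < n)%nat -> f k <= r) -> max_nat f n <= r.
Proof.
  intros Hr; induction n as [|n IH]; intros Hf; simpl; [exact Hr|].
  apply Rmax_lub; [apply IH; intros; apply Hf | apply Hf]; lia.
Qed.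

Lemma Rabs_le_sqrt x y : x * x <= y -> Rabs x <= sqrt y.
Proof. intros H; rewrite <- sqrt_Rsqr_abs; apply sqrt_le_1_alt; exact H. Qed.

Lemma energy1_nonneg M alpha lambda h X :
  0 < h -> 0 <= alpha -> 0 <= lambda -> 0 <= energy1 M alpha lambda h X.
Proof.
  intros Hh Ha Hl; unfold energy1.
  pose proof (nrm2_nonneg M h X Hh); pose proof (nrm2_nonneg M h (dx h X) Hh).
  pose proof (nrm2_nonneg M h (dbx h (dx h X)) Hh); nra.
Qed.

Lemma supn_le_sqrt_energy1 M alpha lambda h X E :
  0 < h -> 0 < alpha -> 0 < lambda -> (1 <= M)%nat -> inZ0 M X ->
  energy1 M alpha lambda h X <= E ->
  supn M X <= sqrt (h * INR M * (E / alpha))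
  /\ supn M (dx h X) <= sqrt (h * INR M * (E / lambda)).
Proof.
  intros Hh Ha Hl HM HX HE.
  pose proof (nrm2_nonneg M h X Hh); pose proof (nrm2_nonneg M h (dx h X) Hh).
  pose proof (nrm2_nonneg M h (dbx h (dx h X)) Hh).
  unfold energy1 in HE.
  assert (HdX : nrm2 M h (dx h X) <= E / alpha).
  { apply (Rmult_le_reg_l alpha); [lra|].
    replace (alpha * (E / alpha)) with E by (field; lra); nra. }
  assert (HdxX : nrm2 M h (dbx h (dx h X)) <= E / lambda).
  { apply (Rmult_le_reg_l lambda); [lra|].
    replace (lambda * (E / lambda)) with E by (field; lra); nra. }
  assert (HhM : 0 <= h * INR M) by (pose proof (pos_INR M); nra).
  split; apply max_nat_le; try apply sqrt_pos; intros j Hj; apply Rabs_le_sqrt.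
  - eapply Rle_trans; [apply (sq_le_nrm2_dx M h); auto; lia|].
    apply Rmult_le_compat_l; assumption.
  - eapply Rle_trans; [apply (sq_dx_le_nrm2_dxx M h); auto; lia|].
    apply Rmult_le_compat_l; assumption.
Qed.

Lemma sq_le_of_Rabs_le x r : Rabs x <= r -> x * x <= r * r.
Proof. unfold Rabs; destruct Rcase_abs; intros; nra. Qed.

Lemma energy1_le_of_pointwise M alpha lambda h X c0 c1 c2 :
  0 < h -> 0 <= alpha -> 0 <= lambda ->
  (forall i, (1 <= i <= Z.of_nat M - 1)%Z ->
     Rabs (X i) <= c0 /\ Rabs (dx h X i) <= c1 /\ Rabs (dbx h (dx h X) i) <= c2) ->
  energy1 M alpha lambda h X <= h * INR M * (c0 * c0 + alpha * (c1 * c1) + lambda * (c2 * c2)).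
Proof.
  intros Hh Ha Hl Hpt.
  set (K := c0 * c0 + alpha * (c1 * c1) + lambda * (c2 * c2)).
  assert (HK : 0 <= K) by (unfold K; nra).
  rewrite energy1_eq_sum.
  assert (Hsum : sum_nat (fun j => energy_density alpha lambda h X (Z.of_nat (S j))) (M - 1)
                 <= INR (M - 1) * K).
  { apply sum_nat_le_const; intros j Hj.
    destruct (Hpt (Z.of_nat (S j)) ltac:(lia)) as (H0 & H1 & H2).
    apply sq_le_of_Rabs_le in H0, H1, H2.
    unfold energy_density, K; nra. }
  assert (INR (M - 1) <= INR M) by (apply le_INR; lia).
  assert (h * INR (M - 1) * K <= h * INR M * K) by (apply Rmult_le_compat_r; nra).
  nra.
Qed.

Lemma continuous_bounded_on (f : R -> R) lo hi :
  lo <= hi -> (forall x, continuity_pt f x) ->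
  exists B, forall x, lo <= x <= hi -> Rabs (f x) <= B.
Proof.
  intros Hlohi Hf.
  destruct (continuity_ab_maj f lo hi Hlohi (fun x _ => Hf x)) as [xmax [Hmax _]].
  destruct (continuity_ab_min f lo hi Hlohi (fun x _ => Hf x)) as [xmin [Hmin _]].
  exists (Rabs (f xmax) + Rabs (f xmin)); intros x Hx.
  specialize (Hmax x Hx); specialize (Hmin x Hx).
  pose proof (Rle_abs (f xmax)); pose proof (Rabs_pos (f xmax)).
  pose proof (Rle_abs (- f xmin)) as Hneg; rewrite Rabs_Ropp in Hneg.
  pose proof (Rabs_pos (f xmin)); apply Rabs_le; split; lra.
Qed.

Section InitialData.

Variables (xl xr h : R) (M : nat) (D0 D1 D2 : R -> R) (U0 : grid).
Hypotheses (h_pos : 0 < h) (mesh : INR M * h = xr - xl)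
  (D0_deriv : forall x, derivable_pt_lim D0 x (D1 x))
  (D1_deriv : forall x, derivable_pt_lim D1 x (D2 x))
  (U0_samples : forall i, (0 <= i <= Z.of_nat M)%Z -> U0 i = D0 (xl + IZR i * h)).

Lemma node_in_interval i : (0 <= i <= Z.of_nat M)%Z -> xl <= xl + IZR i * h <= xr.
Proof.
  intros Hi; assert (0 <= IZR i) by (apply IZR_le; lia).
  assert (IZR i <= INR M) by (rewrite INR_IZR_INZ; apply IZR_le; lia).
  split; nra.
Qed.

Lemma dx_samples_mvt i : (0 <= i)%Z -> (i + 1 <= Z.of_nat M)%Z ->
  exists x, xl + IZR i * h < x < xl + IZR i * h + h /\ dx h U0 i = D1 x.
Proof.
  intros Hi0 HiM.
  destruct (MVT_cor2 D0 D1 (xl + IZR i * h) (xl + IZR i * h + h) ltac:(lra)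
              (fun x _ => D0_deriv x)) as [x [Hx Hmvt]].
  exists x; split; [exact Hmvt|].
  unfold dx; rewrite !U0_samples by lia; rewrite plus_IZR.
  replace (xl + (IZR i + 1) * h) with (xl + IZR i * h + h) by ring.
  rewrite Hx; field; lra.
Qed.

Lemma dxx_samples_bound i : (1 <= i)%Z -> (i + 1 <= Z.of_nat M)%Z ->
  exists x, xl <= x <= xr /\ Rabs (dbx h (dx h U0) i) <= 2 * Rabs (D2 x).
Proof.
  intros Hi1 HiM.
  destruct (dx_samples_mvt i ltac:(lia) HiM) as [x2 [Hx2 E2]].
  destruct (dx_samples_mvt (i - 1) ltac:(lia) ltac:(lia)) as [x1 [Hx1 E1]].
  rewrite minus_IZR in Hx1.
  destruct (MVT_cor2 D1 D2 x1 x2 ltac:(lra) (fun x _ => D1_deriv x)) as [x [Hx Hmvt]].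
  pose proof (node_in_interval (i - 1) ltac:(lia)) as G1; rewrite minus_IZR in G1.
  pose proof (node_in_interval (i + 1) ltac:(lia)) as G2; rewrite plus_IZR in G2.
  exists x; split; [lra|].
  assert (Hgap : 0 <= (x2 - x1) / h <= 2).
  { split; [unfold Rdiv; apply Rmult_le_pos; [lra | left; apply Rinv_0_lt_compat; lra]|].
    apply (Rmult_le_reg_r h); [lra|]; unfold Rdiv; rewrite Rmult_assoc, Rinv_l; lra. }
  unfold dbx; rewrite E2, E1, Hx.
  replace (D2 x * (x2 - x1) / h) with (D2 x * ((x2 - x1) / h)) by (field; lra).
  rewrite Rabs_mult, (Rabs_pos_eq ((x2 - x1) / h)) by lra.
  pose proof (Rabs_pos (D2 x)); nra.
Qed.

Lemma energy1_samples_le alpha lambda B0 B1 B2 :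
  0 <= alpha -> 0 <= lambda ->
  (forall x, xl <= x <= xr -> Rabs (D0 x) <= B0) ->
  (forall x, xl <= x <= xr -> Rabs (D1 x) <= B1) ->
  (forall x, xl <= x <= xr -> Rabs (D2 x) <= B2) ->
  energy1 M alpha lambda h U0
  <= (xr - xl) * (B0 * B0 + alpha * (B1 * B1) + lambda * ((2 * B2) * (2 * B2))).
Proof.
  intros Ha Hl HB0 HB1 HB2.
  rewrite <- mesh, (Rmult_comm (INR M) h).
  apply energy1_le_of_pointwise; auto; intros i Hi; split; [|split].
  - rewrite U0_samples by lia; apply HB0, node_in_interval; lia.
  - destruct (dx_samples_mvt i ltac:(lia) ltac:(lia)) as [x [Hx ->]].
    apply HB1; pose proof (node_in_interval i ltac:(lia)).
    pose proof (node_in_interval (i + 1) ltac:(lia)) as G; rewrite plus_IZR in G; lra.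
  - destruct (dxx_samples_bound i ltac:(lia) ltac:(lia)) as [x [Hx Hb]].
    specialize (HB2 x Hx); lra.
Qed.

End InitialData.

Lemma initial_energy_bound xl xr alpha lambda u0 :
  xl < xr -> 0 <= alpha -> 0 <= lambda -> C7_0 xl xr u0 ->
  exists K, 0 <= K /\
    forall M (U0 : grid), (1 <= M)%nat ->
      (forall i, (0 <= i <= Z.of_nat M)%Z -> U0 i = u0 (xl + IZR i * ((xr - xl) / INR M))) ->
      energy1 M alpha lambda ((xr - xl) / INR M) U0 <= K.
Proof.
  intros Hx Ha Hl (D & HD0 & Hder & _).
  assert (Hcont : forall k, (k < 7)%nat -> forall x, continuity_pt (D k) x).
  { intros k Hk x; exact (derivable_continuous_pt _ x (exist _ _ (Hder k Hk x))). }
  destruct (continuous_bounded_on (D 0%nat) xl xr ltac:(lra) (Hcont 0%nat ltac:(lia))) as [B0 HB0].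
  destruct (continuous_bounded_on (D 1%nat) xl xr ltac:(lra) (Hcont 1%nat ltac:(lia))) as [B1 HB1].
  destruct (continuous_bounded_on (D 2%nat) xl xr ltac:(lra) (Hcont 2%nat ltac:(lia))) as [B2 HB2].
  exists ((xr - xl) * (B0 * B0 + alpha * (B1 * B1) + lambda * ((2 * B2) * (2 * B2)))).
  split; [apply Rmult_le_pos; nra|].
  intros M U0 HM HU0.
  assert (HMpos : 0 < INR M) by (apply lt_0_INR; lia).
  apply (energy1_samples_le xl xr _ M (D 0%nat) (D 1%nat) (D 2%nat)); auto.
  - apply Rdiv_lt_0_compat; lra.
  - field; lra.
  - apply Hder; lia.
  - apply Hder; lia.
  - intros i Hi; rewrite HU0 by exact Hi; symmetry; apply HD0.
Qed.

Lemma energy1_le_twice_initial m a b c nu alpha lambda M N (U : nat -> grid) h tau :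
  0 < h -> tau <> 0 -> 0 <= alpha -> 0 <= lambda -> (4 <= M)%nat ->
  (forall n, (n <= N)%nat -> inZ0 M (U n)) ->
  (forall n, (1 <= n <= N - 1)%nat -> forall i, (2 <= i <= Z.of_nat M - 2)%Z ->
     scheme_S m a b c nu alpha lambda h tau U n i) ->
  energy1 M alpha lambda h (U 1%nat) = energy1 M alpha lambda h (U O) ->
  forall n, (n <= N)%nat -> energy1 M alpha lambda h (U n) <= 2 * energy1 M alpha lambda h (U O).
Proof.
  intros Hh Htau Ha Hl HM HZ HS E1 [|n] Hn.
  - pose proof (energy1_nonneg M alpha lambda h (U O) Hh Ha Hl); lra.
  - pose proof (energy_conserved m a b c nu alpha lambda M N U h tau
                  ltac:(lra) Htau HM HZ HS n ltac:(lia)) as Hcons.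
    rewrite !energy_eq_avg_energy1, E1 in Hcons.
    pose proof (energy1_nonneg M alpha lambda h (U n) Hh Ha Hl); lra.
Qed.
Lemma scheme_solution_bounds m a b c nu alpha lambda M N (U : nat -> grid) h tau K :
  0 < h -> tau <> 0 -> 0 < alpha -> 0 < lambda -> (4 <= M)%nat -> (1 <= N)%nat ->
  (forall n, (n <= N)%nat -> inZ0 M (U n)) ->
  (forall i, (2 <= i <= Z.of_nat M - 2)%Z ->
     scheme_CN m a b c nu alpha lambda h tau (U O) (U 1%nat) i) ->
  (forall n, (1 <= n <= N - 1)%nat -> forall i, (2 <= i <= Z.of_nat M - 2)%Z ->
     scheme_S m a b c nu alpha lambda h tau U n i) ->
  energy1 M alpha lambda h (U O) <= K ->
  energy1 M alpha lambda h (U 1%nat) = energy1 M alpha lambda h (U O)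
  /\ forall n, (n <= N)%nat ->
       supn M (U n) <= sqrt (h * INR M * (2 * K / alpha))
       /\ supn M (dx h (U n)) <= sqrt (h * INR M * (2 * K / lambda)).
Proof.
  intros Hh Htau Ha Hl HM HN HZ HCN HS HK.
  assert (E1 : energy1 M alpha lambda h (U 1%nat) = energy1 M alpha lambda h (U O)).
  { apply (two_level_conserves_energy m a b c nu alpha lambda h tau)
      with (P := avg (U 1%nat) (U O)); try (apply HZ; lia); auto with real.
    intros i Hi; apply scheme_CN_two_level, HCN, Hi. }
  split; [exact E1|].
  intros n Hn.
  apply supn_le_sqrt_energy1; auto; try lia.
  pose proof (energy1_le_twice_initial m a b c nu alpha lambda M N U h tau
                Hh Htau ltac:(lra) ltac:(lra) HM HZ HS E1 n Hn); lra.
Qed.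

Theorem theorem2 (m : nat) (a b c nu alpha lambda xl xr T : R) (u0 : R -> R)
  (hm : (1 <= m)%nat) (halpha : 0 < alpha) (hlambda : 0 < lambda)
  (hx : xl < xr) (hT : 0 < T) (hu0 : C7_0 xl xr u0) :
  (* (i) *)
  (forall (M N : nat) (U : nat -> grid),
     (4 <= M)%nat -> (2 <= N)%nat ->
     let h := (xr - xl) / INR M in
     let tau := T / INR N in
     (forall n, (n <= N)%nat -> inZ0 M (U n)) ->
     (forall n, (1 <= n <= N - 1)%nat ->
        forall i, (2 <= i <= Z.of_nat M - 2)%Z ->
          scheme_S m a b c nu alpha lambda h tau U n i) ->
     forall n, (n <= N - 1)%nat ->
       energy M alpha lambda h U n = energy M alpha lambda h U 0)
  /\
  (* (ii) *)
  (exists C, 0 < C /\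
   forall (M N : nat) (U : nat -> grid),
     (4 <= M)%nat -> (2 <= N)%nat ->
     let h := (xr - xl) / INR M in
     let tau := T / INR N in
     (forall n, (n <= N)%nat -> inZ0 M (U n)) ->
     (forall i, (0 <= i <= Z.of_nat M)%Z -> U O i = u0 (xl + IZR i * h)) ->
     (forall i, (2 <= i <= Z.of_nat M - 2)%Z ->
        scheme_CN m a b c nu alpha lambda h tau (U O) (U 1%nat) i) ->
     (forall n, (1 <= n <= N - 1)%nat ->
        forall i, (2 <= i <= Z.of_nat M - 2)%Z ->
          scheme_S m a b c nu alpha lambda h tau U n i) ->
     energy1 M alpha lambda h (U 1%nat) = energy1 M alpha lambda h (U O) /\
     forall n, (n <= N)%nat ->
       supn M (U n) <= C /\ supn M (dx h (U n)) <= C).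
Proof.
  assert (Hmesh : forall M N : nat, (4 <= M)%nat -> (2 <= N)%nat ->
            0 < (xr - xl) / INR M /\ 0 < T / INR N /\ (xr - xl) / INR M * INR M = xr - xl).
  { intros M N HM HN.
    assert (0 < INR M) by (apply lt_0_INR; lia); assert (0 < INR N) by (apply lt_0_INR; lia).
    repeat split; [apply Rdiv_lt_0_compat; lra | apply Rdiv_lt_0_compat; lra | field; lra]. }
  split.
  - intros M N U HM HN h tau HZ HS.
    destruct (Hmesh M N HM HN) as (Hh & Htau & _); fold h in Hh; fold tau in Htau.
    apply (energy_conserved m a b c nu alpha lambda M N U h tau); auto; lra.
  - destruct (initial_energy_bound xl xr alpha lambda u0) as (K & HK & HE0); auto; try lra.
    set (bound w := sqrt ((xr - xl) * (2 * K / w))).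
    exists (1 + bound alpha + bound lambda).
    assert (0 <= bound alpha /\ 0 <= bound lambda) by (split; apply sqrt_pos).
    split; [lra|].
    intros M N U HM HN h tau HZ HU0 HCN HS.
    destruct (Hmesh M N HM HN) as (Hh & Htau & HhM); fold h in Hh, HhM; fold tau in Htau.
    pose proof (HE0 M (U O) ltac:(lia) HU0) as HK0; fold h in HK0.
    destruct (scheme_solution_bounds m a b c nu alpha lambda M N U h tau K) as [E1 Hsup];
      auto with real; try lra.
    split; [exact E1|].
    intros n Hn; rewrite HhM in Hsup; destruct (Hsup n Hn).
    unfold bound in *; split; lra.
Qed.
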